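(* For every process term $p$ and every $d\in\mathbb{D}$: $[\![p]\!]\le d$ if and only if $(\mathbb{D},d)\models^a\varphi_p$.
   Context: Fix a finite set $\mathrm{Act}$ of events. For a dcpo $D$, $K(D)$ denotes its compact elements; a bifinite (SFP) domain is an algebraic dcpo in which for each finite $F\subseteq K(D)$ iterated minimal-upper-bound sets are finite and in $K(D)$ and every upper bound of $F$ is above a minimal upper bound. Scott topology: sets $U={\uparrow}(U\cap K(D))$; Lawson topology generated by ${\uparrow}k\setminus{\uparrow}l$, $k,l\in K(D)$. The mixed powerdomain $\mathcal{M}(D)$: pairs $(L,U)$, $L$ Scott-closed, $U$ Lawson-closed upper, $L={\downarrow}(L\cap U)$, ordered by $(L,U)\le(L',U')$ iff $L\subseteq L'$ and $U'\subseteq U$. $\mathbb{D}$ is the initial solution over bifinite domains of $\mathbb{D}\cong\prod_{\alpha\in\mathrm{Act}}\mathcal{M}(\mathbb{D})$, $d=((L^d_\alpha,U^d_\alpha))_\alpha$, viewed as a mixed transition system $(\mathbb{D},\mathbb{R}^a,\mathbb{R}^c)$ with $(d,\alpha,d')\in\mathbb{R}^a$ iff $d'\in L^d_\alpha$ and $(d,\alpha,d')\in\mathbb{R}^c$ iff $d'\in U^d_\alpha$. Hennessy–Milner logic: $\varphi::=tt\mid\neg\varphi\mid\langle\alpha\rangle\varphi\mid\varphi\wedge\varphi$; $[\alpha]\varphi:=\neg\langle\alpha\rangle\neg\varphi$, $\varphi\vee\psi:=\neg(\neg\varphi\wedge\neg\psi)$; empty conjunction is $tt$, empty disjunction is $\neg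 tt$. For $m\in\{a,c\}$ ($\neg a=c$, $\neg c=a$): $(\mathbb{D},d)\models^m tt$; $(\mathbb{D},d)\models^m\neg\varphi$ iff not $(\mathbb{D},d)\models^{\neg m}\varphi$; $(\mathbb{D},d)\models^m\langle\alpha\rangle\varphi$ iff $(\mathbb{D},d')\models^m\varphi$ for some $(d,\alpha,d')\in\mathbb{R}^m$; $\wedge$ componentwise. Process terms: $p::=\mathbf{0}\mid\bot\mid\alpha_{tt}.p\mid\alpha_\bot.p\mid p+p$ ($\alpha\in\mathrm{Act}$; neither summand of $+$ is $\mathbf{0}$ or $\bot$). Denotations: $[\![\mathbf{0}]\!]=((\emptyset,\emptyset))_\alpha$; $[\![\bot]\!]=((\emptyset,\mathbb{D}))_\alpha$; $[\![\alpha_{tt}.p]\!]$ has $\alpha$-component $({\downarrow}[\![p]\!],{\uparrow}[\![p]\!])$ and $(\emptyset,\emptyset)$ for $\beta\ne\alpha$; $[\![\alpha_\bot.p]\!]$ has $\alpha$-component $(\emptyset,{\uparrow}[\![p]\!])$ and $(\emptyset,\emptyset)$ for $\beta\ne\alpha$; $[\![p+q]\!]$ is the componentwise union of the $L$'s and of the $U$'s. Transitions: $\bot\xrightarrow{\gamma}_\bot\bot$ for all $\gamma$; $\alpha_{tt}.p\xrightarrow{\alpha}_{tt}p$; $\alpha_\bot.p\xrightarrow{\alpha}_\bot p$; if $p\xrightarrow{\alpha}_v p'$ then $p+q\xrightarrow{\alpha}_v p'$ and $q+p\xrightarrow{\alpha}_v p'$. Formulas: $\varphi_{\mathbf{0}}=\bigwedge_\alpha\neg\langle\alpha\rangle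 tt$; $\varphi_\bot=tt$; $\varphi_{\alpha_{tt}.p}=\langle\alpha\rangle\varphi_p\wedge[\alpha]\varphi_p\wedge\bigwedge_{\beta\ne\alpha}\neg\langle\beta\rangle tt$; $\varphi_{\alpha_\bot.p}=[\alpha]\varphi_p\wedge\bigwedge_{\beta\ne\alpha}\neg\langle\beta\rangle tt$; $\varphi_{p+q}=\bigwedge\{\langle\alpha\rangle\varphi_{r'} : p+q\xrightarrow{\alpha}_{tt}r'\}\wedge\bigwedge_{\alpha}[\alpha]\bigvee\{\varphi_{r'} : p+q\xrightarrow{\alpha}_v r',\ v\in\{\bot,tt\}\}$. *)

From Stdlib Require List.
From mathcomp Require Import all_boot.
Set Implicit Arguments.
Unset Strict Implicit.
Unset Printing Implicit Defensive.

Section Domains.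
Variables (D : Type) (le : D -> D -> Prop).

Definition subset (A B : D -> Prop) := forall x, A x -> B x.
Definition seteq (A B : D -> Prop) := forall x, A x <-> B x.
Definition setC (A : D -> Prop) : D -> Prop := fun x => ~ A x.
Definition upset (A : D -> Prop) : D -> Prop := fun y => exists x, A x /\ le x y.
Definition downset (A : D -> Prop) : D -> Prop := fun y => exists x, A x /\ le y x.
Definition up (x : D) : D -> Prop := fun y => le x y.
Definition down (x : D) : D -> Prop := fun y => le y x.
Definition is_upper (A : D -> Prop) := forall x y, A x -> le x y -> A y.

Definition finite_set (A : D -> Prop) := exists l : list D, forall x, A x <-> List.In x l.

Definition partial_order :=
  (forall x, le x x) /\ (forall x y z, le x y -> le y z -> le x z) /\
  (forall x y, le x y -> le y x -> x = y).

Definition directed (S : D -> Prop) :=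
  (exists x, S x) /\ (forall x y, S x -> S y -> exists z, S z /\ le x z /\ le y z).

Definition upper_bound (S : D -> Prop) (x : D) := forall s, S s -> le s x.
Definition is_lub (S : D -> Prop) (x : D) :=
  upper_bound S x /\ forall y, upper_bound S y -> le x y.

Definition dcpo := partial_order /\ forall S, directed S -> exists x, is_lub S x.

Definition compact (k : D) :=
  forall S x, directed S -> is_lub S x -> le k x -> exists s, S s /\ le k s.

Definition algebraic :=
  dcpo /\ forall x, directed (fun k => compact k /\ le k x) /\
                    is_lub (fun k => compact k /\ le k x) x.

Definition mub (A : D -> Prop) : D -> Prop :=
  fun x => upper_bound A x /\ forall y, upper_bound A y -> le y x -> y = x.

Definition mub_closure (F : D -> Prop) : D -> Prop :=
  fun x => forall C : D -> Prop,
    subset F C ->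
    (forall G, finite_set G -> subset G C -> subset (mub G) C) -> C x.

Definition bifinite :=
  algebraic /\
  forall F, finite_set F -> subset F compact ->
    finite_set (mub_closure F) /\ subset (mub_closure F) compact /\
    (forall y, upper_bound F y -> exists m, mub F m /\ le m y).

Definition scott_open (U : D -> Prop) :=
  forall x, U x <-> exists k, compact k /\ U k /\ le k x.
Definition scott_closed (L : D -> Prop) := scott_open (setC L).

(* Lawson topology: generated by the subbasis  up k \ up l,  k, l compact;
   open sets are unions of finite intersections of subbasic sets *)
Definition in_subbasic_meet (ps : list (D * D)) (x : D) :=
  forall kl, List.In kl ps -> le kl.1 x /\ ~ le kl.2 x.
Definition lawson_open (O : D -> Prop) :=
  forall x, O x -> exists ps : list (D * D),
    (forall kl, List.In kl ps -> compact kl.1 /\ compact kl.2) /\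
    in_subbasic_meet ps x /\ (forall y, in_subbasic_meet ps y -> O y).
Definition lawson_closed (U : D -> Prop) := lawson_open (setC U).

Definition mpd := ((D -> Prop) * (D -> Prop))%type.
Definition mixed (LU : mpd) :=
  scott_closed LU.1 /\ lawson_closed LU.2 /\ is_upper LU.2 /\
  seteq LU.1 (downset (fun y => LU.1 y /\ LU.2 y)).
Definition mpd_le (LU LU' : mpd) := subset LU.1 LU'.1 /\ subset LU'.2 LU.2.

End Domains.

Section Solution.
Variables (Act : finType) (D : Type) (le : D -> D -> Prop).
Variables (unfold : D -> Act -> mpd D) (fold : (Act -> mpd D) -> D).

Definition mixed_solution :=
  bifinite le /\
  (forall d a, mixed le (unfold d a)) /\
  (forall t : Act -> mpd D, (forall a, mixed le (t a)) ->
     forall a, seteq (unfold (fold t) a).1 (t a).1 /\ seteq (unfold (fold t) a).2 (t a).2) /\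
  (forall d, fold (unfold d) = d) /\
  (forall d d', le d d' <-> forall a, mpd_le (unfold d a) (unfold d' a)).

(* transition relations R^a (mode true) and R^c (mode false) *)
Definition trans_rel (m : bool) (d : D) (a : Act) (d' : D) :=
  if m then (unfold d a).1 d' else (unfold d a).2 d'.

End Solution.

Inductive form (Act : Type) : Type :=
| TT
| Neg of form Act
| Dia of Act & form Act
| And of form Act & form Act.
Arguments TT {Act}.

Definition Box (Act : Type) (a : Act) (f : form Act) := Neg (Dia a (Neg f)).
Definition Or (Act : Type) (f g : form Act) := Neg (And (Neg f) (Neg g)).
Definition bigAnd (Act : Type) (fs : seq (form Act)) := foldr (@And Act) TT fs.
Definition bigOr (Act : Type) (fs : seq (form Act)) := foldr (@Or Act) (Neg TT) fs.

(* mode true = a (may/"a"), mode false = c *)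
Fixpoint sat (Act : finType) (D : Type) (unfold : D -> Act -> mpd D)
    (m : bool) (d : D) (f : form Act) {struct f} : Prop :=
  match f with
  | TT => True
  | Neg g => ~ sat unfold (~~ m) d g
  | Dia a g => exists d', trans_rel unfold m d a d' /\ sat unfold m d' g
  | And g h => sat unfold m d g /\ sat unfold m d h
  end.

Inductive proc (Act : Type) : Type :=
| PNil
| PBot
| PreT of Act & proc Act
| PreB of Act & proc Act
| PSum of proc Act & proc Act.
Arguments PNil {Act}.
Arguments PBot {Act}.

Fixpoint wf_proc (Act : Type) (p : proc Act) : Prop :=
  match p with
  | PNil | PBot => True
  | PreT _ q | PreB _ q => wf_proc q
  | PSum q r =>
      q <> PNil /\ q <> PBot /\ r <> PNil /\ r <> PBot /\ wf_proc q /\ wf_proc r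
  end.

Section Procs.
Variable Act : finType.

(* labelled transitions  p --alpha-->_v p'  as triples (alpha, v, p'),
   v = true for tt, v = false for bot *)
Fixpoint trans (p : proc Act) : seq (Act * bool * proc Act) :=
  match p with
  | PNil => [::]
  | PBot => [seq (g, false, PBot) | g <- enum Act]
  | PreT a q => [:: (a, true, q)]
  | PreB a q => [:: (a, false, q)]
  | PSum q r => trans q ++ trans r
  end.

Definition no_other (a : Act) : form Act :=
  bigAnd [seq Neg (Dia b TT) | b <- enum Act & b != a].

(* characteristic formula phi_p; in the sum case the nested function [tr]
   computes [seq (t.1, phi t.2) | t <- trans s] (structurally). *)
Fixpoint phi (p : proc Act) : form Act :=
  match p with
  | PNil => bigAnd [seq Neg (Dia a TT) | a <- enum Act]
  | PBot => TT
  | PreT a q => And (And (Dia a (phi q)) (Box a (phi q))) (no_other a)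
  | PreB a q => And (Box a (phi q)) (no_other a)
  | PSum q r =>
      let fix tr (s : proc Act) : seq (Act * bool * form Act) :=
        match s with
        | PNil => [::]
        | PBot => [seq (g, false, phi s) | g <- enum Act]
        | PreT a s' => [:: (a, true, phi s')]
        | PreB a s' => [:: (a, false, phi s')]
        | PSum s1 s2 => tr s1 ++ tr s2
        end in
      let ts := tr q ++ tr r in
      And (bigAnd [seq Dia t.1.1 t.2 | t <- ts & t.1.2])
          (bigAnd [seq Box a (bigOr [seq t.2 | t <- ts & t.1.1 == a]) | a <- enum Act])
  end.

Variables (D : Type) (le : D -> D -> Prop).
Variables (unfold : D -> Act -> mpd D) (fold : (Act -> mpd D) -> D).

Definition emptyset : D -> Prop := fun _ => False.
Definition fullset : D -> Prop := fun _ => True.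

Fixpoint den (p : proc Act) : D :=
  match p with
  | PNil => fold (fun _ => (emptyset, emptyset))
  | PBot => fold (fun _ => (emptyset, fullset))
  | PreT a q => fold (fun b => if b == a then (down le (den q), up le (den q))
                               else (emptyset, emptyset))
  | PreB a q => fold (fun b => if b == a then (emptyset, up le (den q))
                               else (emptyset, emptyset))
  | PSum q r =>
      let dq := den q in let dr := den r in
      fold (fun b => ((fun x => (unfold dq b).1 x \/ (unfold dr b).1 x),
                      (fun x => (unfold dq b).2 x \/ (unfold dr b).2 x)))
  end.

End Procs.

(* Both sides reduce, one transition step at a time, to the same condition on d:
   for every action a, each transition p --a-->_tt q is answered by an a-may-successor
   of d related to q, and each a-must-successor of d is related to the target q of some
   transition p --a-->_v q.  For the order, "related to q" means "above [[q]]": the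
   a-component of [[p]] is the pair (down-closure of the [[q]] with p --a-->_tt q,
   up-closure of all [[q]] with p --a-->_v q), the isomorphism D ~ prod M(D) compares
   components by inclusion, and may-sets are lower sets.  For the logic it means
   "satisfies phi_q", which is how phi_p is built.  Targets of transitions are
   subterms of p or bot, so induction on p identifies the two conditions. *)

From Stdlib Require Import Classical.
From mathcomp Require Import all_boot.
Set Implicit Arguments.
Unset Strict Implicit.

Lemma In_mem (T : eqType) (x : T) (s : seq T) : x \in s -> List.In x s.
Proof. by elim: s => //= y s IH; rewrite inE => /orP [/eqP ->|/IH]; [left|right]. Qed.

Lemma In_enum (T : finType) (x : T) : List.In x (enum T).
Proof. by apply: In_mem; rewrite mem_enum. Qed.

Section Algebraic.
Variables (D : Type) (le : D -> D -> Prop).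
Hypothesis alg : algebraic le.

Lemma le_refl x : le x x.
Proof. by have [[[refl _] _] _] := alg. Qed.

Lemma le_trans x y z : le x y -> le y z -> le x z.
Proof. by have [[[_ [trans _]] _] _] := alg; apply: trans. Qed.

Lemma compact_below x : exists k, compact le k /\ le k x.
Proof. by case: alg => _ /(_ x) [[[k]]]; exists k. Qed.

Lemma compact_directed x k1 k2 : compact le k1 -> le k1 x -> compact le k2 -> le k2 x ->
  exists k, compact le k /\ le k x /\ le k1 k /\ le k2 k.
Proof.
case: alg => _ /(_ x) [[_ dir] _] ck1 k1x ck2 k2x.
by have [k [[ck kx] [k1k k2k]]] := dir k1 k2 (conj ck1 k1x) (conj ck2 k2x); exists k.
Qed.

Lemma compact_separation x y : ~ le x y -> exists k, compact le k /\ le k x /\ ~ le k y.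
Proof.
move=> nxy; apply: NNPP => nk; apply: nxy.
case: alg => _ /(_ x) [_ [_ lub]]; apply: lub => k [ck kx].
by apply: NNPP => nky; apply: nk; exists k.
Qed.

Lemma scott_closed_empty : scott_closed le (@emptyset D).
Proof.
move=> x; split=> [_|_ /= []].
by have [k [ck kx]] := compact_below x; exists k; do 2!split=> //; case.
Qed.

Lemma scott_closed_down u : scott_closed le (down le u).
Proof.
move=> x; split=> [/compact_separation [k [ck [kx nku]]]|[k [ck [nku kx]]] xu].
  by exists k.
by apply: nku; apply: le_trans xu.
Qed.

Lemma scott_closed_union L1 L2 : scott_closed le L1 -> scott_closed le L2 ->
  scott_closed le (fun x => L1 x \/ L2 x).
Proof.
move=> cl1 cl2 y; split=> [nL|[k [ck [nLk ky]]] [L1y|L2y]].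
- have /(cl1 y).1 [k1 [ck1 [nL1 k1y]]] : ~ L1 y by move=> h; apply: nL; left.
  have /(cl2 y).1 [k2 [ck2 [nL2 k2y]]] : ~ L2 y by move=> h; apply: nL; right.
  have [k [ck [ky [k1k k2k]]]] := compact_directed ck1 k1y ck2 k2y.
  exists k; split=> //; split=> // -[L1k|L2k].
  + by apply: (cl1 k).2 L1k; exists k1.
  + by apply: (cl2 k).2 L2k; exists k2.
- by apply: (cl1 y).2 L1y; exists k; split=> //; split=> // h; apply: nLk; left.
- by apply: (cl2 y).2 L2y; exists k; split=> //; split=> // h; apply: nLk; right.
Qed.

Lemma lawson_closed_up u : lawson_closed le (up le u).
Proof.
move=> x /compact_separation [k [ck [ku nkx]]].
have [m [cm mx]] := compact_below x.
exists [:: (m, k)]; split; first by move=> _ [<-|[]].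
split; first by move=> _ [<-|[]].
by move=> y /(_ (m, k) (or_introl erefl)) [_ nky] uy; apply: nky; apply: le_trans uy.
Qed.

Lemma lawson_closed_union U1 U2 : lawson_closed le U1 -> lawson_closed le U2 ->
  lawson_closed le (fun x => U1 x \/ U2 x).
Proof.
move=> cl1 cl2 y nU.
have [ps1 [c1 [i1 o1]]] : exists ps, _ := cl1 y (fun h => nU (or_introl h)).
have [ps2 [c2 [i2 o2]]] : exists ps, _ := cl2 y (fun h => nU (or_intror h)).
exists (ps1 ++ ps2); split; last split.
- by move=> kl /List.in_app_iff [/c1|/c2].
- by move=> kl /List.in_app_iff [/i1|/i2].
- move=> z iz [U1z|U2z].
  + by apply: o1 U1z => kl kl1; apply: iz; apply/List.in_app_iff; left.
  + by apply: o2 U2z => kl kl2; apply: iz; apply/List.in_app_iff; right.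
Qed.

Lemma lawson_closed_empty : lawson_closed le (@emptyset D).
Proof. by move=> x _; exists [::]; do 2!split=> //; move=> y _ []. Qed.

Lemma lawson_closed_full : lawson_closed le (@fullset D).
Proof. by move=> x []. Qed.

Lemma mixed_emptyL U : lawson_closed le U -> is_upper le U -> mixed le (@emptyset D, U).
Proof.
move=> clU upU; split; first exact: scott_closed_empty.
by do 2!split=> //; move=> x; split=> [[]|[_ [[[]]]]].
Qed.

Lemma mixed_empty : mixed le (@emptyset D, @emptyset D).
Proof. by apply: mixed_emptyL => //; apply: lawson_closed_empty. Qed.

Lemma mixed_empty_full : mixed le (@emptyset D, @fullset D).
Proof. by apply: mixed_emptyL => //; apply: lawson_closed_full. Qed.

Lemma mixed_empty_up u : mixed le (@emptyset D, up le u).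
Proof. by apply: mixed_emptyL; [apply: lawson_closed_up|move=> y z; apply: le_trans]. Qed.

Lemma mixed_down_up u : mixed le (down le u, up le u).
Proof.
split; first exact: scott_closed_down.
split; first exact: lawson_closed_up.
split; first by move=> x y ux xy; apply: le_trans xy.
move=> x /=; split=> [xu|[z [[zu _] xz]]]; last exact: le_trans xz zu.
by exists u; do 2!split=> //; apply: le_refl.
Qed.

Lemma mixed_lower (A : mpd D) x y : mixed le A -> A.1 y -> le x y -> A.1 x.
Proof.
move=> [_ [_ [_ eqA]]] /(eqA y).1 [z [Az yz]] xy.
by apply/(eqA x).2; exists z; split=> //; apply: le_trans yz.
Qed.

Lemma mixed_union (A B : mpd D) : mixed le A -> mixed le B ->
  mixed le ((fun x => A.1 x \/ B.1 x), (fun x => A.2 x \/ B.2 x)).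
Proof.
move=> mA mB; have [sA [lA [uA eA]]] := mA; have [sB [lB [uB eB]]] := mB.
split; first exact: scott_closed_union.
split; first exact: lawson_closed_union.
split; first by move=> x y [Ax|Bx] xy; [left; apply: uA Ax xy|right; apply: uB Bx xy].
move=> x /=; split=> [[/(eA x).1|/(eB x).1] [z [[L U] xz]]|[z [[[L|L] _] xz]]].
- by exists z; split=> //; split; left.
- by exists z; split=> //; split; right.
- by left; apply: mixed_lower mA L xz.
- by right; apply: mixed_lower mB L xz.
Qed.

End Algebraic.

Definition trans_form (Act : finType) (T : Type) (g : T -> form Act) (ts : seq (Act * bool * T)) :=
  And (bigAnd [seq Dia t.1.1 (g t.2) | t <- ts & t.1.2])
      (bigAnd [seq Box a (bigOr [seq g t.2 | t <- ts & t.1.1 == a]) | a <- enum Act]).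

Lemma trans_form_map (Act : finType) (T T' : Type) (f : T -> T') (g : T' -> form Act) ts :
  trans_form g [seq (t.1, f t.2) | t <- ts] = trans_form (g \o f) ts.
Proof.
rewrite /trans_form filter_map -map_comp; congr (And _ (bigAnd _)).
by apply: eq_map => a; rewrite filter_map -map_comp.
Qed.

(* Up to conversion, the auxiliary fixpoint in the [PSum] clause of [phi]. *)
Definition phi_trans (Act : finType) := fix tr (s : proc Act) : seq (Act * bool * form Act) :=
  match s with
  | PNil => [::]
  | PBot => [seq (g, false, phi s) | g <- enum Act]
  | PreT a s' => [:: (a, true, phi s')]
  | PreB a s' => [:: (a, false, phi s')]
  | PSum s1 s2 => tr s1 ++ tr s2
  end.

Lemma phi_transE (Act : finType) (s : proc Act) :
  phi_trans s = [seq (t.1, @phi Act t.2) | t <- trans s].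
Proof. by elim: s => //= [|q -> r ->]; rewrite ?map_cat // -map_comp. Qed.

Lemma phi_PSum (Act : finType) (q r : proc Act) :
  phi (PSum q r) = trans_form (@phi Act) (trans (PSum q r)).
Proof. by rewrite -[LHS]/(trans_form id (phi_trans (PSum q r))) phi_transE trans_form_map. Qed.

Lemma In_trans_PBot (Act : finType) (a : Act) v q :
  List.In (a, v, q) (trans PBot) <-> v = false /\ q = PBot.
Proof.
rewrite List.in_map_iff; split=> [[g [[_ <- <-]]]|[-> ->]] //.
by exists a; split=> //; apply: In_enum.
Qed.

Section Satisfaction.
Variables (Act : finType) (D : Type) (unfold : D -> Act -> mpd D).

Local Notation sat_a := (sat unfold true).
Local Notation L d a := (unfold d a).1.
Local Notation U d a := (unfold d a).2.

Lemma sat_bigAnd m d fs : sat unfold m d (bigAnd fs) <-> forall f, List.In f fs -> sat unfold m d f.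
Proof.
elim: fs => [|f fs IH] //=; rewrite IH.
by split=> [[sf sfs] g [<-|/sfs]|sfs] //; split=> [|g gs]; apply: sfs; [left|right].
Qed.

Lemma sat_bigOr d fs : sat_a d (bigOr fs) <-> exists2 f, List.In f fs & sat_a d f.
Proof.
elim: fs => [|f fs IH] /=; first by split=> // -[].
split=> [nn|[g [<-|gs] sg] [nf nfs]].
- apply: NNPP => nex; apply: nn; split=> [sf|/IH [g gs sg]]; apply: nex.
  + by exists f; [left|].
  + by exists g; [right|].
- exact: nf.
- by apply: nfs; apply/IH; exists g.
Qed.

Lemma sat_Box d a f : sat_a d (Box a f) <-> forall x, U d a x -> sat_a x f.
Proof.
split=> [nex x Ux|every [x [Ux nf]]]; last exact: nf (every x Ux).
by apply: NNPP => nf; apply: nex; exists x.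
Qed.

Lemma sat_no_trans d a : sat_a d (Neg (Dia a TT)) <-> forall x, ~ U d a x.
Proof. by split=> [nex x Ux|none [x [Ux _]]]; [apply: nex; exists x|apply: none Ux]. Qed.

Lemma sat_no_other d b : sat_a d (no_other b) <-> forall a x, U d a x -> a = b.
Proof.
rewrite sat_bigAnd; split=> [none a x Ux|only f /List.in_map_iff [a [<- /List.filter_In [_ ab]]]].
  apply/eqP; apply: contraT => ab.
  have /sat_no_trans/(_ x Ux) [] : sat_a d (Neg (Dia a TT)).
  apply: none; apply/List.in_map_iff; exists a; split=> //.
  by apply/List.filter_In; split=> //; apply: In_enum.
by apply/sat_no_trans => x /only /eqP; rewrite (negbTE ab).
Qed.

Lemma sat_Box_no_other d b f :
  sat_a d (Box b f) /\ sat_a d (no_other b) <-> forall a x, U d a x -> a = b /\ sat_a x f.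
Proof.
rewrite sat_Box sat_no_other; split=> [[every only] a x Ux|every].
  by have ab := only a x Ux; split=> //; subst a; apply: every.
by split=> [x /every []|a x /every []].
Qed.

Definition trans_match (T : Type) (R : T -> D -> Prop) (ts : seq (Act * bool * T)) d :=
  forall a, (forall q, List.In (a, true, q) ts -> exists2 y, L d a y & R q y) /\
            (forall x, U d a x -> exists v q, List.In (a, v, q) ts /\ R q x).

Lemma trans_match_ext (T : Type) (R R' : T -> D -> Prop) ts d :
  (forall t x, List.In t ts -> R t.2 x <-> R' t.2 x) ->
  trans_match R ts d <-> trans_match R' ts d.
Proof.
have imp R1 R2 : trans_match R1 ts d ->
    (forall t x, List.In t ts -> R1 t.2 x -> R2 t.2 x) -> trans_match R2 ts d.
  move=> tm R12 a; have [tmL tmU] := tm a; split.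
  - by move=> q tq; have [y Ly Rqy] := tmL q tq; exists y => //; exact: (R12 _ _ tq Rqy).
  - by move=> x /tmU [v [q [tq Rqx]]]; exists v, q; split=> //; exact: (R12 _ _ tq Rqx).
by move=> eqR; split=> tm; apply: (imp _ _ tm) => t x /(eqR t x) [].
Qed.

Lemma trans_match_nil (T : Type) (R : T -> D -> Prop) d :
  trans_match R [::] d <-> forall a x, ~ U d a x.
Proof. by split=> [tm a x /(tm a).2 [v [q [[] _]]]|none a]; split=> [q []|x /none]. Qed.

Lemma trans_match_single (T : Type) (R : T -> D -> Prop) b v q d :
  trans_match R [:: (b, v, q)] d <->
  (v -> exists2 y, L d b y & R q y) /\ (forall a x, U d a x -> a = b /\ R q x).
Proof.
split=> [tm|[may must] a].
  split=> [vt|a x /(tm a).2 [v' [q' [[[<- _ <-]|[]] Rqx]]]] //.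
  by case: v vt tm => // _ tm; apply: (tm b).1; left.
split=> [q' [[<- vt <-]|[]]|x /must [-> Rqx]]; first exact: may vt.
by exists v, q; split=> //; left.
Qed.

Lemma sat_trans_form (T : Type) (g : T -> form Act) ts d :
  sat_a d (trans_form g ts) <-> trans_match (fun q x => sat_a x (g q)) ts d.
Proof.
split=> [[/sat_bigAnd sD /sat_bigAnd sB] a|tm]; first split.
- move=> q tq; have [y [Ly sy]] : sat_a d (Dia a (g q)).
    by apply: sD; apply/List.in_map_iff; exists (a, true, q); rewrite List.filter_In.
  by exists y.
- move=> x Ux.
  have /sat_Box/(_ x Ux)/sat_bigOr [f] :
      sat_a d (Box a (bigOr [seq g t.2 | t <- ts & t.1.1 == a])).
    by apply: sB; apply/List.in_map_iff; exists a; split=> //; apply: In_enum.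
  move=> /List.in_map_iff [[[a' v] q] [<- /List.filter_In [tq /= /eqP ea]]] sq.
  by exists v, q; rewrite -ea.
split; apply/sat_bigAnd => f /List.in_map_iff [].
- move=> [[a v] q] [<- /List.filter_In [tq /= vt]]; subst v.
  by have [y Ly sy] := (tm a).1 q tq; exists y.
- move=> a [<- _]; apply/sat_Box => x /(tm a).2 [v [q [tq sq]]].
  apply/sat_bigOr; exists (g q) => //; apply/List.in_map_iff.
  by exists (a, v, q); rewrite List.filter_In /= eqxx.
Qed.

Lemma sat_phi p d : sat_a d (phi p) <-> trans_match (fun q x => sat_a x (phi q)) (trans p) d.
Proof.
case: p => [||b q|b q|q r].
- rewrite trans_match_nil sat_bigAnd.
  split=> [every a x Ux|none f /List.in_map_iff [a [<- _]]]; last exact/sat_no_trans/none.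
  have /sat_no_trans/(_ x Ux) [] : sat_a d (Neg (Dia a TT)).
  by apply: every; apply/List.in_map_iff; exists a; split=> //; apply: In_enum.
- split=> // _ a; split=> [q /In_trans_PBot [] //|x _].
  by exists false, PBot; split=> //; apply/In_trans_PBot.
- rewrite trans_match_single -(sat_Box_no_other d b (phi q)).
  split=> [[[[y [Ly sy]] sB] sN]|[may [sB sN]]]; first by split=> // _; exists y.
  by have [y Ly sy] := may isT; do 2!split=> //; exists y.
- by rewrite trans_match_single -(sat_Box_no_other d b (phi q)); split=> [[]|[]].
- by rewrite phi_PSum sat_trans_form.
Qed.

End Satisfaction.

Section Denotation.
Variables (Act : finType) (D : Type) (le : D -> D -> Prop).
Variables (unfold : D -> Act -> mpd D) (fold : (Act -> mpd D) -> D).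
Hypothesis sol : mixed_solution le unfold fold.

Local Notation den := (den le unfold fold).
Local Notation L d a := (unfold d a).1.
Local Notation U d a := (unfold d a).2.

Lemma sol_algebraic : algebraic le.
Proof. by have [[]] := sol. Qed.

Lemma unfold_mixed d a : mixed le (unfold d a).
Proof. by have [_ []] := sol. Qed.

Lemma unfold_fold t : (forall a, mixed le (t a)) ->
  forall a x, (L (fold t) a x <-> (t a).1 x) /\ (U (fold t) a x <-> (t a).2 x).
Proof. by have [_ [_ [fold_mixed _]]] := sol => /fold_mixed eqt a x; have [] := eqt a. Qed.

Lemma le_unfold d d' : le d d' <-> forall a, mpd_le (unfold d a) (unfold d' a).
Proof. by have [_ [_ [_ []]]] := sol. Qed.

Lemma den_bot_le d : le (den PBot) d.
Proof.
have mt (_ : Act) := mixed_empty_full sol_algebraic.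
apply/le_unfold => a; have eqt := unfold_fold mt a.
by split=> x; [move/(eqt x).1|move=> _; apply/(eqt x).2].
Qed.

Lemma unfold_fold_single b (A : mpd D) a x : mixed le A ->
  let t c := if c == b then A else (@emptyset D, @emptyset D) in
  (L (fold t) a x <-> a = b /\ A.1 x) /\ (U (fold t) a x <-> a = b /\ A.2 x).
Proof.
move=> mA t; have mt c : mixed le (t c).
  by rewrite /t; case: eqP => _ //; apply: mixed_empty sol_algebraic.
have [-> ->] := unfold_fold mt a x; rewrite /t.
by case: eqP => [->|ab]; [split; split=> [|[]]|split; split=> [[]|[]]].
Qed.

Lemma unfold_den p a x :
  (L (den p) a x <-> exists2 q, List.In (a, true, q) (trans p) & le x (den q)) /\
  (U (den p) a x <-> exists v q, List.In (a, v, q) (trans p) /\ le (den q) x).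
Proof.
have alg : algebraic le := sol_algebraic.
elim: p a x => [||b q _|b q _|q IHq r IHr] a x.
- have mt (_ : Act) := mixed_empty alg.
  have [-> ->] := unfold_fold mt a x.
  by split; [split=> [[]|[? []]]|split=> [[]|[? [? [[] _]]]]].
- have mt (_ : Act) := mixed_empty_full alg.
  have [-> ->] := unfold_fold mt a x.
  split; first by split=> [[]|[q /In_trans_PBot []]].
  split=> [_|_ //]; exists false, PBot.
  by split; [apply/In_trans_PBot|apply: den_bot_le].
- have [-> ->] := unfold_fold_single b a x (mixed_down_up alg (den q)).
  split; split.
  + by case=> -> xq; exists q; [left|].
  + by case=> q' [[<- <-]|[]].
  + by case=> -> qx; exists true, q; split=> //; left.
  + by case=> v [q' [[[<- _ <-]|[]] qx]].
- have [-> ->] := unfold_fold_single b a x (mixed_empty_up alg (den q)).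
  split; split.
  + by case.
  + by case=> q' [[]|[]].
  + by case=> -> qx; exists false, q; split=> //; left.
  + by case=> v [q' [[[<- _ <-]|[]] qx]].
- have mt (c : Act) : mixed le ((fun y => L (den q) c y \/ L (den r) c y),
                                (fun y => U (den q) c y \/ U (den r) c y)).
    exact: (mixed_union alg (unfold_mixed (den q) c) (unfold_mixed (den r) c)).
  have [-> ->] := unfold_fold mt a x; rewrite /=.
  have [-> ->] := IHq a x; have [-> ->] := IHr a x.
  split; split.
  + by case=> -[q' tq xq]; exists q' => //; apply/List.in_app_iff; [left|right].
  + by case=> q' /List.in_app_iff [tq|tq] xq; [left|right]; exists q'.
  + by case=> -[v [q' [tq qx]]]; exists v, q'; split=> //; apply/List.in_app_iff; [left|right].
  + by case=> v [q' [/List.in_app_iff [tq|tq] qx]]; [left|right]; exists v, q'.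
Qed.

Lemma den_le_trans_match p d :
  le (den p) d <-> trans_match unfold (fun q y => le (den q) y) (trans p) d.
Proof.
have alg : algebraic le := sol_algebraic.
rewrite le_unfold; split=> [dle a|tm a].
- have [Lsub Usub] := dle a; split=> [q tq|x Ux]; last exact/(unfold_den p a x).2/Usub.
  exists (den q); last exact: le_refl.
  by apply: Lsub; apply/(unfold_den p a _).1; exists q => //; apply: le_refl.
- split=> [x /(unfold_den p a x).1 [q tq xq]|x /(tm a).2 Ux]; last exact/(unfold_den p a x).2.
  have [y Ly qy] := (tm a).1 q tq.
  exact: (mixed_lower alg (unfold_mixed d a) Ly (le_trans alg xq qy)).
Qed.

Lemma den_le_iff_sat_phi_of_trans p :
  (forall t x, List.In t (trans p) -> le (den t.2) x <-> sat unfold true x (phi t.2)) ->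
  forall d, le (den p) d <-> sat unfold true d (phi p).
Proof. by move=> eq_trans d; rewrite den_le_trans_match sat_phi; apply: trans_match_ext. Qed.

Lemma trans_den_le_iff_sat_phi p t x : List.In t (trans p) ->
  le (den t.2) x <-> sat unfold true x (phi t.2).
Proof.
elim: p t x => [||b q IHq|b q IHq|q IHq r IHr] t x //=.
- by move=> /List.in_map_iff [g [<- _]]; split=> // _; apply: den_bot_le.
- by move=> [<-|[]]; apply: den_le_iff_sat_phi_of_trans.
- by move=> [<-|[]]; apply: den_le_iff_sat_phi_of_trans.
- by move=> /List.in_app_iff [/IHq|/IHr].
Qed.

Lemma den_le_iff_sat_phi p d : le (den p) d <-> sat unfold true d (phi p).
Proof. by apply: den_le_iff_sat_phi_of_trans => t x; apply: trans_den_le_iff_sat_phi. Qed.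

End Denotation.

Theorem lemma3p11 (Act : finType) (D : Type) (le : D -> D -> Prop)
    (unfold : D -> Act -> mpd D) (fold : (Act -> mpd D) -> D)
    (Hsol : mixed_solution le unfold fold)
    (p : proc Act) (Hp : wf_proc p) (d : D) :
  le (den le unfold fold p) d <-> sat unfold true d (phi p).
Proof. exact: den_le_iff_sat_phi Hsol p d. Qed.
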